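(* Let $\Lambda\in\mathcal{M}_2$ and $a\in[0,1]$, and let $\widehat{\Lambda}(t):=\Lambda(t,1-t)$ for $t\in[0,1]$. The following are equivalent: (1) the right derivative $\widehat{\Lambda}'(0)$ equals $a$; (2) $\lim_{y\to\infty}\Lambda(x,y)=ax$ for all $x\in\mathbb{R}_+$.
   Context: $\mathcal{M}_2$ is the set of bivariate (lower) tail dependence functions, i.e. functions $\mathbb{R}_+^2\to\mathbb{R}_+$ ($\mathbb{R}_+=[0,\infty)$) of the form $\Lambda(\mathbf{w})=\lim_{s\searrow0}C(s\mathbf{w})/s$ for a $2$-copula $C$ (limit existing for all $\mathbf{w}$). Such $\Lambda$ are concave, $1$-Lipschitz, positively homogeneous of order $1$, and satisfy $0\le\Lambda(w_1,w_2)\le\min\{w_1,w_2\}$. *)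

From Stdlib Require Import Reals Lra.
From Coquelicot Require Import Coquelicot.
Open Scope R_scope.

(* A 2-copula, represented as a function R -> R -> R whose values on [0,1]^2
   matter: maps [0,1]^2 into [0,1], grounded, uniform margins, 2-increasing. *)
Definition is_copula2 (C : R -> R -> R) : Prop :=
  (forall u v, 0 <= u <= 1 -> 0 <= v <= 1 -> 0 <= C u v <= 1) /\
  (forall u, 0 <= u <= 1 ->
     C u 0 = 0 /\ C 0 u = 0 /\ C u 1 = u /\ C 1 u = u) /\
  (forall u1 u2 v1 v2, 0 <= u1 -> u1 <= u2 -> u2 <= 1 ->
     0 <= v1 -> v1 <= v2 -> v2 <= 1 ->
     0 <= C u2 v2 - C u2 v1 - C u1 v2 + C u1 v1).

Definition is_tdf_of (C : R -> R -> R) (L : R -> R -> R) : Prop :=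
  forall w1 w2, 0 <= w1 -> 0 <= w2 ->
    filterlim (fun s => C (s * w1) (s * w2) / s) (at_right 0) (locally (L w1 w2)).

Definition in_M2 (L : R -> R -> R) : Prop :=
  exists C, is_copula2 C /\ is_tdf_of C L.

Definition Lhat (L : R -> R -> R) (t : R) : R := L t (1 - t).

(* By homogeneity, the difference quotient of [Lhat L] at [h] is
   [L(h, 1 - h) / h = L(1, 1/h - 1)], and [L(x, y) = x L(1, y/x)] for [x > 0].
   As [h |-> 1/h - 1] maps [0+] onto [+oo], both conditions say that
   [L(1, y) -> a] as [y -> +oo].  Only positive homogeneity and [L(0, y) = 0]
   are used. *)
From Stdlib Require Import Reals Lra.
From Coquelicot Require Import Coquelicot.
Open Scope R_scope.

Lemma filterlim_at_right {T} (F : (T -> Prop) -> Prop) {FF : Filter F}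
    (f : T -> R) (l : R) :
  filterlim f F (locally l) -> F (fun x => l < f x) -> filterlim f F (at_right l).
Proof.
intros Hf Hpos P [eps HP]; unfold filtermap.
apply (filter_imp (fun x => ball l eps (f x) /\ l < f x)).
- intros x [Hx Hlx]. now apply HP.
- apply filter_and; [now apply Hf; exists eps | exact Hpos].
Qed.

Lemma filterlim_Rmult_r_at_right0 (c : R) : 0 < c ->
  filterlim (fun s => s * c) (at_right 0) (at_right 0).
Proof.
intros Hc. apply (filterlim_at_right (at_right 0)).
- apply (filterlim_filter_le_1 _ (filter_le_within _)).
  replace 0 with (0 * c) at 2 by ring.
  exact (filterlim_scal_l (V := R_NormedModule) 0 c).
- exists (mkposreal 1 Rlt_0_1). intros s _ Hs. simpl. nra.
Qed.

Lemma at_right0_lt (eps : R) : 0 < eps -> at_right 0 (fun s => s < eps).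
Proof.
intros He. exists (mkposreal eps He). intros s Hs _.
change (Rabs (s - 0) < eps) in Hs. rewrite Rminus_0_r in Hs.
apply Rabs_def2 in Hs. lra.
Qed.

Lemma filterlim_Rinv_pred_at_right0 :
  filterlim (fun h => / h - 1) (at_right 0) (Rbar_locally p_infty).
Proof.
apply (filterlim_comp _ _ _ Rinv (fun z => z - 1) _ (Rbar_locally p_infty)).
- exact filterlim_Rinv_0_right.
- intros P [M HP]. exists (M + 1). intros z Hz. apply HP. lra.
Qed.

Lemma filterlim_Rinv_succ_p_infty :
  filterlim (fun y => / (y + 1)) (Rbar_locally p_infty) (at_right 0).
Proof.
apply (filterlim_at_right (Rbar_locally p_infty)).
- apply (is_lim_inv (fun y => y + 1) p_infty p_infty); [|discriminate].
  intros P [M HP]. exists (M - 1). intros y Hy. apply HP. lra.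
- exists 0. intros y Hy. apply Rinv_0_lt_compat. lra.
Qed.

Lemma filterlim_div_p_infty (x : R) : 0 < x ->
  filterlim (fun y => y / x) (Rbar_locally p_infty) (Rbar_locally p_infty).
Proof.
intros Hx P [M HP]. exists (M * x). intros y Hy. apply HP.
apply (Rmult_lt_reg_r x); [exact Hx|]. unfold Rdiv. rewrite Rmult_assoc, Rinv_l; lra.
Qed.

Lemma is_lim_p_infty_iff_at_right0 (f : R -> R) (l : R) :
  is_lim f p_infty l <-> filterlim (fun h => f (/ h - 1)) (at_right 0) (locally l).
Proof.
split.
- intros Hf.
  apply (is_lim_comp' _ _ p_infty l filterlim_Rinv_pred_at_right0 Hf).
  now apply filter_forall.
- intros Hf.
  apply (filterlim_ext_loc (fun y => f (/ / (y + 1) - 1))).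
  + exists (-1). intros y Hy. rewrite Rinv_inv. f_equal. ring.
  + exact (filterlim_comp _ _ _ _ _ _ _ _ filterlim_Rinv_succ_p_infty Hf).
Qed.

Section TailDependenceFunction.

Variables C L : R -> R -> R.
Hypothesis HL : is_tdf_of C L.

Lemma tdf_homogeneous (c w1 w2 : R) : 0 < c -> 0 <= w1 -> 0 <= w2 ->
  L (c * w1) (c * w2) = c * L w1 w2.
Proof.
intros Hc H1 H2.
apply (filterlim_locally_unique (F := at_right 0)
         (fun s => C (s * (c * w1)) (s * (c * w2)) / s)).
- apply HL; nra.
- (* [C(s c w) / s = c C((s c) w) / (s c)], and [s c -> 0+] as [s -> 0+]. *)
  apply (filterlim_ext_loc (fun s => c * (C (s * c * w1) (s * c * w2) / (s * c)))).
  + exists (mkposreal 1 Rlt_0_1). intros s _ Hs. rewrite !Rmult_assoc. field; lra.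
  + apply (filterlim_comp _ _ _ (fun s => C (s * c * w1) (s * c * w2) / (s * c))
             (fun z => c * z) _ (locally (L w1 w2))).
    * apply (filterlim_comp _ _ _ (fun s => s * c) (fun t => C (t * w1) (t * w2) / t)
               _ (at_right 0)); [now apply filterlim_Rmult_r_at_right0 | now apply HL].
    * exact (filterlim_scal_r (V := R_NormedModule) c (L w1 w2)).
Qed.

Lemma tdf_zero_l : (forall v, 0 <= v <= 1 -> C 0 v = 0) ->
  forall y, 0 <= y -> L 0 y = 0.
Proof.
intros C0 y Hy.
apply (filterlim_locally_unique (F := at_right 0) (fun s => C (s * 0) (s * y) / s)).
- apply HL; lra.
- apply (filterlim_ext_loc (fun _ => 0)); [|apply filterlim_const].
  assert (Hinv : 0 < / (y + 1)) by (apply Rinv_0_lt_compat; lra).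
  apply (filter_imp (fun s => s < / (y + 1) /\ 0 < s)).
  + intros s [Hs Hs0].
    assert (s * (y + 1) < 1).
    { apply (Rmult_lt_compat_r (y + 1)) in Hs; [|lra].
      now rewrite Rinv_l in Hs by lra. }
    rewrite Rmult_0_r, C0 by nra. unfold Rdiv. ring.
  + apply filter_and; [now apply at_right0_lt|now exists (mkposreal 1 Rlt_0_1)].
Qed.

End TailDependenceFunction.

Section HomogeneousFunction.

Variable L : R -> R -> R.
Hypothesis L_hom : forall c w1 w2, 0 < c -> 0 <= w1 -> 0 <= w2 ->
  L (c * w1) (c * w2) = c * L w1 w2.
Hypothesis L_0l : forall y, 0 <= y -> L 0 y = 0.

Lemma L_eq_mul_L1 (x y : R) : 0 < x -> 0 <= y -> L x y = x * L 1 (y / x).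
Proof.
intros Hx Hy. rewrite <- L_hom; try lra.
- f_equal; field; lra.
- apply Rdiv_le_0_compat; lra.
Qed.

Lemma Lhat_diff_quot_eq (h : R) : 0 < h < 1 ->
  (Lhat L h - Lhat L 0) / h = L 1 (/ h - 1).
Proof.
intros Hh. unfold Lhat. rewrite L_0l, L_eq_mul_L1 by lra.
replace ((1 - h) / h) with (/ h - 1) by (field; lra). field; lra.
Qed.

Lemma Lhat_right_deriv_iff (a : R) :
  filterlim (fun h => (Lhat L h - Lhat L 0) / h) (at_right 0) (locally a)
  <-> is_lim (L 1) p_infty a.
Proof.
assert (Heq : at_right 0 (fun h => (Lhat L h - Lhat L 0) / h = L 1 (/ h - 1))).
{ apply (filter_imp (fun h => h < 1 /\ 0 < h)).
  - intros h Hh. apply Lhat_diff_quot_eq. lra.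
  - apply filter_and;
      [now apply at_right0_lt, Rlt_0_1 | now exists (mkposreal 1 Rlt_0_1)]. }
rewrite is_lim_p_infty_iff_at_right0.
split; apply filterlim_ext_loc; [exact Heq|].
apply (filter_imp _ _ (fun h => @eq_sym R _ _) Heq).
Qed.

Lemma is_lim_p_infty_sections_iff (a : R) :
  (forall x, 0 <= x -> is_lim (fun y => L x y) p_infty (a * x))
  <-> is_lim (L 1) p_infty a.
Proof.
split.
- intros H. rewrite <- (Rmult_1_r a). apply H. lra.
- intros H1 x Hx. destruct (Rle_lt_or_eq_dec 0 x Hx) as [Hxpos | <-].
  + apply (is_lim_ext_loc (fun y => x * L 1 (y / x))).
    * exists 0. intros y Hy. symmetry. apply L_eq_mul_L1; lra.
    * rewrite Rmult_comm. apply (is_lim_scal_l _ x _ a).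
      apply (is_lim_comp' (F := Rbar_locally p_infty) _ _ p_infty a
               (filterlim_div_p_infty x Hxpos) H1).
      now apply filter_forall.
  + apply (is_lim_ext_loc (fun _ => 0)).
    * exists 0. intros y Hy. symmetry. apply L_0l. lra.
    * rewrite Rmult_0_r. apply is_lim_const.
Qed.

End HomogeneousFunction.

Theorem mainTheorem7 (L : R -> R -> R) (a : R) :
  in_M2 L -> 0 <= a <= 1 ->
  ( filterlim (fun h => (Lhat L h - Lhat L 0) / h) (at_right 0) (locally a)
    <->
    (forall x, 0 <= x -> is_lim (fun y => L x y) p_infty (a * x)) ).
Proof.
intros [C [[_ [C_grounded _]] HL]] _.
assert (L_hom := tdf_homogeneous C L HL).
assert (L_0l : forall y, 0 <= y -> L 0 y = 0).
{ apply (tdf_zero_l C L HL). intros v Hv. apply C_grounded. exact Hv. }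
rewrite (Lhat_right_deriv_iff L L_hom L_0l), (is_lim_p_infty_sections_iff L L_hom L_0l).
reflexivity.
Qed.
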